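(* Let $\Gamma$ be a group, $\alpha\in\mathrm{Aut}(\Gamma)$ and $\omega:\Gamma\times\Gamma\to\Gamma$, $\omega(g,h)=\alpha(g)$. Consider the action $\rho$ of $V$ on $\prod_{\mathbb Q_2}\Gamma$ given by $$\rho(v)(a)(x)=\alpha^{-\log_2(v'(v^{-1}x))}\big(a(v^{-1}x)\big),\quad a:\mathbb Q_2\to\Gamma,\ v\in V,\ x\in\mathbb Q_2.$$ Then $G(\omega)$ is isomorphic to the (unrestricted twisted permutational wreath product) $\prod_{\mathbb Q_2}\Gamma\rtimes_\rho V$.
   Context: $\{0,1\}^*$ denotes the finite words over $\{0,1\}$ (including the empty word), $|u|$ the length; $\mathfrak C=\{0,1\}^{\mathbb N}$; $\mathbb Q_2\subset\mathfrak C$ is the set of eventually-zero sequences; $\prod_{\mathbb Q_2}\Gamma$ is the group of all maps $\mathbb Q_2\to\Gamma$ under pointwise product. A finite complete prefix code is a finite set $\{t_1,\dots,t_n\}\subset\{0,1\}^*$ such that every $x\in\mathfrak C$ has exactly one $t_i$ as prefix. Thompson's group $V$ is the group of homeomorphisms $v$ of $\mathfrak C$ for which there exist finite complete prefix codes $\{t_i\},\{s_i\}$ and a permutation $\sigma$ with $v(t_iw)=s_{\sigma(i)}w$ for all $i$, $w\in\mathfrak C$ ($V$ preserves $\mathbb Q_2$); for $y\in\mathfrak C$ with prefix $t_i$, $v'(y):=2^{|t_i|-|s_{\sigma(i)}|}$. $K(\omega)$ is the group of maps $a:\{0,1\}^*\to\Gamma$ with $a(u)=\omega(a(u0),a(u1))$;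 $V$ acts on it by $\pi(v)(a)(s_{\sigma(i)}u)=a(t_iu)$ for all $i$, $u\in\{0,1\}^*$ (determining $\pi(v)(a)\in K(\omega)$ uniquely); $G(\omega):=K(\omega)\rtimes V$ with $vav^{-1}=\pi(v)(a)$. *)

From Stdlib Require Import ClassicalEpsilon.
From mathcomp Require Import all_boot all_order all_algebra all_fingroup.
Set Implicit Arguments. Unset Strict Implicit. Unset Printing Implicit Defensive.
Import GRing.Theory Num.Theory.

Record grp := Grp {
  carrier :> Type;
  Gmul : carrier -> carrier -> carrier;
  Gone : carrier;
  Ginv : carrier -> carrier;
  GmulA : forall x y z, Gmul x (Gmul y z) = Gmul (Gmul x y) z;
  Gmul1 : forall x, Gmul Gone x = x;
  GmulV : forall x, Gmul (Ginv x) x = Gone }.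

Definition finv (A : Type) (f : A -> A) (x : A) : A :=
  epsilon (inhabits x) (fun y => f y = x).

Definition apow (A : Type) (f : A -> A) (k : int) : A -> A :=
  match k with
  | Posz n => iter n f
  | Negz n => iter n.+1 (finv f)
  end.

Definition cantor := nat -> bool.

Definition catw (u : seq bool) (w : cantor) : cantor :=
  fun n => if n < size u then nth false u n else w (n - size u).

Definition is_prefix (u : seq bool) (x : cantor) : Prop :=
  forall n, n < size u -> x n = nth false u n.

Definition complete_prefix_code (n : nat) (t : 'I_n -> seq bool) : Prop :=
  forall x : cantor, exists! i, is_prefix (t i) x.

Definition V_rep (v : cantor -> cantor) (n : nat) (t s : 'I_n -> seq bool)
  (sigma : {perm 'I_n}) : Prop :=
  [/\ complete_prefix_code t, complete_prefix_code s &
      forall i w, v (catw (t i) w) = catw (s (sigma i)) w].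

Definition isV (v : cantor -> cantor) : Prop :=
  exists n (t s : 'I_n -> seq bool) (sigma : {perm 'I_n}), V_rep v t s sigma.

Definition Vt := {v : cantor -> cantor | isV v}.

Definition mulV (v w : Vt) : Vt :=
  epsilon (inhabits v) (fun u : Vt => sval u = sval v \o sval w).

(* log_2 v'(y) = |t_i| - |s_sigma(i)| for a representation of v with t_i prefix of y *)
Definition vlog (v : Vt) (y : cantor) : int :=
  epsilon (inhabits 0%R) (fun k : int =>
    exists n (t s : 'I_n -> seq bool) (sigma : {perm 'I_n}),
      V_rep (sval v) t s sigma /\
      exists i, is_prefix (t i) y /\
        k = ((size (t i))%:Z - (size (s (sigma i)))%:Z)%R).

(* ---------- Q_2 : eventually-zero sequences ---------- *)
Definition inQ2 (x : cantor) : Prop := exists N, forall n, N <= n -> x n = false.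
Definition Q2t := {x : cantor | inQ2 x}.

Definition vinvQ (v : Vt) (x : Q2t) : Q2t :=
  epsilon (inhabits x) (fun y : Q2t => sval v (sval y) = sval x).

Section Wreath.
Variables (Gam : grp) (alpha : Gam -> Gam).

Definition rho (v : Vt) (a : Q2t -> Gam) : Q2t -> Gam :=
  fun x => apow alpha (- vlog v (sval (vinvQ v x)))%R (a (vinvQ v x)).

Definition WR := ((Q2t -> Gam) * Vt)%type.

Definition mulW (p q : WR) : WR :=
  (fun x => Gmul (p.1 x) (rho p.2 q.1 x), mulV p.2 q.2).

Definition omega (g h : Gam) : Gam := alpha g.

Definition inK (a : seq bool -> Gam) : Prop :=
  forall u, a u = omega (a (rcons u false)) (a (rcons u true)).

Definition Kt := {a : seq bool -> Gam | inK a}.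

Definition mulK (a b : Kt) : Kt :=
  epsilon (inhabits a) (fun c : Kt => sval c = fun u => Gmul (sval a u) (sval b u)).

Definition piK (v : Vt) (a : Kt) : Kt :=
  epsilon (inhabits a) (fun b : Kt =>
    exists n (t s : 'I_n -> seq bool) (sigma : {perm 'I_n}),
      V_rep (sval v) t s sigma /\
      forall i u, sval b (s (sigma i) ++ u) = sval a (t i ++ u)).

Definition GW := (Kt * Vt)%type.

(* (a,v)(b,w) = (a . pi(v)(b), v w), i.e. v a v^{-1} = pi(v)(a) *)
Definition mulG (p q : GW) : GW := (mulK p.1 (piK p.2 q.1), mulV p.2 q.2).

End Wreath.

(* For omega(g, h) = alpha(g) the defining relation of K(omega) reads a(u) = alpha(a(u0)),
   so alpha^|u|(a(u)) only depends on the point u0^oo of Q_2.  This defines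
   Phi : K(omega) -> prod_{Q_2} Gamma, Phi(a)(u0^oo) = alpha^|u|(a(u)), a group isomorphism
   because alpha is one, with inverse f |-> (u |-> alpha^-|u|(f(u0^oo))).  If
   v(t_i w) = s_sigma(i) w, then
     Phi(pi(v)a)(s_sigma(i) u0^oo) = alpha^(|s_sigma(i)| + |u|)(a(t_i u))
                                   = alpha^(|s_sigma(i)| - |t_i|)(Phi(a)(t_i u0^oo)),
   which is rho(v)(Phi a) at that point since log_2 v' = |t_i| - |s_sigma(i)| on t_i C.
   Hence (a, v) |-> (Phi a, v) is an isomorphism G(omega) -> prod_{Q_2} Gamma ><|_rho V. *)

From Pilot Require Import Defs.
From mathcomp Require Import all_boot all_order all_algebra all_fingroup.
From mathcomp Require Import zify.
From Stdlib Require Import ClassicalEpsilon FunctionalExtensionality ProofIrrelevance.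
Set Implicit Arguments. Unset Strict Implicit. Unset Printing Implicit Defensive.

Lemma sval_inj (A : Type) (P : A -> Prop) : injective (@proj1_sig A P).
Proof. by case=> x px [y py] /= xy; apply: subset_eq_compat. Qed.

Section ClassicalInverse.
Variables (A : Type) (f : A -> A).
Hypothesis f_bij : bijective f.

Lemma finvK : cancel f (Defs.finv f).
Proof.
move=> x; have [g fK _] := f_bij; apply: (can_inj fK).
exact: (epsilon_spec (inhabits (f x)) (fun y => f y = f x) (ex_intro _ x erefl)).
Qed.

Lemma finvKV : cancel (Defs.finv f) f.
Proof.
move=> y; have [g _ fgK] := f_bij.
exact: (epsilon_spec (inhabits y) (fun z => f z = y) (ex_intro _ (g y) (fgK y))).
Qed.

Lemma iter_finvK n : cancel (iter n f) (iter n (Defs.finv f)).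
Proof. by elim: n => // n IHn x; rewrite iterSr iterS finvK. Qed.

Lemma iter_finvKV n : cancel (iter n (Defs.finv f)) (iter n f).
Proof. by elim: n => // n IHn x; rewrite iterSr iterS finvKV. Qed.

Lemma apow_subn_iter m n x : apow f (m%:Z - n%:Z)%R (iter n f x) = iter m f x.
Proof.
case: (leqP n m) => [le_nm | lt_mn].
  by rewrite subzn //= -iterD subnK.
have -> : (m%:Z - n%:Z)%R = Negz (n - m).-1 by lia.
rewrite /= -iterS prednK ?subn_gt0 //.
by rewrite -[X in iter X f x](subnK (ltnW lt_mn)) iterD iter_finvK.
Qed.

End ClassicalInverse.

Lemma iter_morph (G : grp) (f : G -> G) n :
  (forall x y, f (Gmul x y) = Gmul (f x) (f y)) ->
  forall x y, iter n f (Gmul x y) = Gmul (iter n f x) (iter n f y).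
Proof. by move=> fM; elim: n => // n IHn x y; rewrite !iterS IHn fM. Qed.

Definition zeros : cantor := fun _ => false.

Definition dropc (k : nat) (y : cantor) : cantor := fun n => y (n + k).

Lemma catw_cat p q w : catw (p ++ q) w = catw p (catw q w).
Proof.
apply: functional_extensionality => n; rewrite /catw size_cat nth_cat.
case: (ltnP n (size p)) => [lt_np|le_pn]; first by rewrite ltn_addr.
by rewrite -subnDA -ltn_subLR.
Qed.

Lemma is_prefix_catw p w : is_prefix p (catw p w).
Proof. by move=> n lt_np; rewrite /catw lt_np. Qed.

Lemma catw_dropc p y : is_prefix p y -> catw p (dropc (size p) y) = y.
Proof.
move=> py; apply: functional_extensionality => n; rewrite /catw /dropc.
by case: ltnP => [/py|/subnK] ->.
Qed.

Lemma catw_inj p : injective (catw p).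
Proof.
move=> w1 w2 E; apply: functional_extensionality => n.
have := congr1 (fun h => h (n + size p)) E.
by rewrite /catw ltnNge leq_addl /= addnK.
Qed.

Lemma catw_size p q : (forall w, catw p w = catw q w) -> size p = size q.
Proof.
wlog lt_pq : p q / size p < size q => [hwlog E|E].
  case: (ltngtP (size p) (size q)) => // lt; first exact: hwlog.
  by apply/esym/hwlog => // w; rewrite E.
have := congr1 (fun h => h (size p)) (E (fun _ => ~~ nth false q (size p))).
by rewrite /catw ltnn lt_pq; case: (nth false q (size p)).
Qed.

Lemma mkseq_catw p w : mkseq (catw p w) (size p) = p.
Proof.
apply: (@eq_from_nth _ false); rewrite size_mkseq // => i lt_ip.
by rewrite nth_mkseq // /catw lt_ip.
Qed.

Lemma is_prefix_mkseq p y : is_prefix p y -> mkseq y (size p) = p.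
Proof. by move=> /catw_dropc <-; rewrite mkseq_catw. Qed.

Lemma is_prefix_cat_drop p q y : is_prefix p y -> is_prefix q y ->
  size p <= size q -> q = p ++ drop (size p) q.
Proof.
move=> /is_prefix_mkseq py /is_prefix_mkseq qy le_pq.
rewrite -{1}(cat_take_drop (size p) q); congr (_ ++ _).
by rewrite -[q]qy -[RHS]py /mkseq -map_take take_iota (minn_idPl le_pq).
Qed.

Lemma complete_prefix_code_cover n (t : 'I_n -> seq bool) y :
  complete_prefix_code t -> exists i, is_prefix (t i) y.
Proof. by move=> /(_ y) [i [ti_y _]]; exists i. Qed.

Lemma complete_prefix_code_uniq n (t : 'I_n -> seq bool) y i j :
  complete_prefix_code t -> is_prefix (t i) y -> is_prefix (t j) y -> i = j.
Proof. by move=> /(_ y) [k [_ k_uniq]] /k_uniq <- /k_uniq. Qed.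

Lemma V_rep_inj f n (t s : 'I_n -> seq bool) (sg : {perm 'I_n}) :
  V_rep f t s sg -> injective f.
Proof.
move=> [t_code s_code fE].
have f_catw_dropc i y : is_prefix (t i) y ->
    f y = catw (s (sg i)) (dropc (size (t i)) y).
  by move=> ti_y; rewrite -{1}(catw_dropc ti_y) fE.
move=> y1 y2 E; have [i ti_y1] := complete_prefix_code_cover y1 t_code.
have [k tk_y2] := complete_prefix_code_cover y2 t_code.
have ik : i = k.
  apply/perm_inj/(complete_prefix_code_uniq (y := f y1) s_code).
    by rewrite (f_catw_dropc i); first exact: is_prefix_catw.
  by rewrite E (f_catw_dropc k); first exact: is_prefix_catw.
subst k; move: E; rewrite !(f_catw_dropc i) // => /catw_inj/(congr1 (catw (t i))).
by rewrite !catw_dropc.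
Qed.

Lemma V_rep_log_eq f n (t s : 'I_n -> seq bool) (sg : {perm 'I_n})
    n' (t' s' : 'I_n' -> seq bool) (sg' : {perm 'I_n'}) i i' y :
  V_rep f t s sg -> V_rep f t' s' sg' -> is_prefix (t i) y -> is_prefix (t' i') y ->
  ((size (t i))%:Z - (size (s (sg i)))%:Z = (size (t' i'))%:Z - (size (s' (sg' i')))%:Z)%R.
Proof.
wlog le_tt' : n t s sg n' t' s' sg' i i' / size (t i) <= size (t' i').
  move=> hwlog rep rep' ti_y ti'_y.
  have [le|/ltnW le] := leqP (size (t i)) (size (t' i')); first exact: hwlog.
  exact/esym/hwlog.
move=> [_ _ fE] [_ _ fE'] ti_y ti'_y; set r := drop (size (t i)) (t' i').
have t'E : t' i' = t i ++ r := is_prefix_cat_drop ti_y ti'_y le_tt'.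
have s'E : size (s' (sg' i')) = size (s (sg i) ++ r).
  by apply: catw_size => w; rewrite -fE' t'E !catw_cat fE.
rewrite s'E t'E !size_cat; lia.
Qed.

Lemma vlog_rep (v : Vt) n (t s : 'I_n -> seq bool) (sg : {perm 'I_n}) i y :
  V_rep (sval v) t s sg -> is_prefix (t i) y ->
  vlog v y = ((size (t i))%:Z - (size (s (sg i)))%:Z)%R.
Proof.
move=> rep ti_y; rewrite /vlog.
set P := fun k : int => _.
have : P (epsilon (inhabits 0%R) P).
  apply: epsilon_spec; exists ((size (t i))%:Z - (size (s (sg i)))%:Z)%R.
  by exists n, t, s, sg; split=> //; exists i.
case=> n' [t' [s' [sg' [rep' [i' [ti'_y ->]]]]]].
exact: V_rep_log_eq rep' rep ti'_y ti_y.
Qed.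

Lemma vinvQ_eq (v : Vt) x y : sval v (sval y) = sval x -> vinvQ v x = y.
Proof.
move=> vy; have [n [t [s [sg rep]]]] := svalP v.
apply/sval_inj/(V_rep_inj rep); rewrite vy.
apply: (epsilon_spec (inhabits x) (fun z : Q2t => sval v (sval z) = sval x)).
by exists y.
Qed.

Lemma inQ2_catw0 u : inQ2 (catw u zeros).
Proof. by exists (size u) => n; rewrite /catw ltnNge => ->. Qed.

Definition Q2_of_word u : Q2t := exist _ (catw u zeros) (inQ2_catw0 u).

Lemma Q2_of_word_rcons0 u : Q2_of_word (rcons u false) = Q2_of_word u.
Proof.
apply: sval_inj; rewrite /= -cats1 catw_cat; congr (catw _ _).
by apply: functional_extensionality => -[].
Qed.

Lemma Q2_of_word_prefix x p : is_prefix p (sval x) -> exists u, x = Q2_of_word (p ++ u).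
Proof.
move=> px; have [N xN] := svalP x.
exists (mkseq (dropc (size p) (sval x)) N); apply: sval_inj.
rewrite /= catw_cat -[LHS](catw_dropc px); congr (catw _ _).
apply: functional_extensionality => m; rewrite /catw size_mkseq.
case: ltnP => [lt_mN|le_Nm]; first by rewrite nth_mkseq.
by rewrite /zeros /dropc xN // (leq_trans le_Nm) ?leq_addr.
Qed.

Definition zero_tail (x : Q2t) : nat :=
  epsilon (inhabits 0) (fun N => forall n, N <= n -> sval x n = false).

Lemma zero_tailP x n : zero_tail x <= n -> sval x n = false.
Proof. by move: n; apply: (epsilon_spec (inhabits 0) _ (svalP x)). Qed.

Lemma mkseq_cat_nseq0 (x : cantor) N M : (forall n, N <= n -> x n = false) ->
  N <= M -> mkseq x M = mkseq x N ++ nseq (M - N) false.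
Proof.
move=> xN le_NM; apply: (@eq_from_nth _ false).
  by rewrite size_cat !size_mkseq size_nseq subnKC.
move=> j; rewrite size_mkseq => lt_jM; rewrite nth_mkseq // nth_cat size_mkseq.
by case: ltnP => [lt_jN|le_Nj]; [rewrite nth_mkseq | rewrite nth_nseq xN // if_same].
Qed.

Section KOmega.
Variables (Gam : grp) (alpha : Gam -> Gam).
Hypothesis alpha_morph : forall x y, alpha (Gmul x y) = Gmul (alpha x) (alpha y).
Hypothesis alpha_bij : bijective alpha.

Lemma K_nseq0 (a : Kt alpha) u k : iter k alpha (sval a (u ++ nseq k false)) = sval a u.
Proof.
elim: k u => [|k IHk] u; first by rewrite cats0.
by rewrite iterS [nseq _ _]/= -cat_rcons IHk [RHS](svalP a u).
Qed.

Lemma iter_K_mkseq_stable (a : Kt alpha) x N M : (forall n, N <= n -> x n = false) ->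
  N <= M -> iter M alpha (sval a (mkseq x M)) = iter N alpha (sval a (mkseq x N)).
Proof.
move=> xN le_NM.
by rewrite (mkseq_cat_nseq0 xN le_NM) -{1}(subnKC le_NM) iterD K_nseq0.
Qed.

Definition fun_of_K (a : Kt alpha) (x : Q2t) : Gam :=
  iter (zero_tail x) alpha (sval a (mkseq (sval x) (zero_tail x))).

Lemma fun_of_K_mkseq x M (xM : forall n, M <= n -> sval x n = false) a :
  fun_of_K a x = iter M alpha (sval a (mkseq (sval x) M)).
Proof.
rewrite /fun_of_K; have [le|/ltnW le] := leqP (zero_tail x) M.
  by rewrite (iter_K_mkseq_stable a (@zero_tailP x) le).
by rewrite (iter_K_mkseq_stable a xM le).
Qed.

Lemma fun_of_K_word a u : fun_of_K a (Q2_of_word u) = iter (size u) alpha (sval a u).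
Proof.
have u0 n : size u <= n -> sval (Q2_of_word u) n = false by rewrite /= /catw ltnNge => ->.
by rewrite (fun_of_K_mkseq u0) mkseq_catw.
Qed.

Lemma mulK_val (a b : Kt alpha) : sval (mulK a b) = fun u => Gmul (sval a u) (sval b u).
Proof.
apply: (epsilon_spec (inhabits a)
  (fun c : Kt alpha => sval c = fun u => Gmul (sval a u) (sval b u))).
have abK : inK alpha (fun u => Gmul (sval a u) (sval b u)).
  by move=> u; rewrite [sval a u](svalP a) [sval b u](svalP b) /omega alpha_morph.
by exists (exist _ _ abK).
Qed.

Lemma fun_of_K_mul a b x : fun_of_K (mulK a b) x = Gmul (fun_of_K a x) (fun_of_K b x).
Proof. by rewrite /fun_of_K mulK_val iter_morph. Qed.

Lemma K_of_fun_subproof (f : Q2t -> Gam) :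
  inK alpha (fun u => iter (size u) (Defs.finv alpha) (f (Q2_of_word u))).
Proof. by move=> u; rewrite /omega size_rcons Q2_of_word_rcons0 iterS finvKV. Qed.

Definition K_of_fun (f : Q2t -> Gam) : Kt alpha := exist _ _ (K_of_fun_subproof f).

Lemma K_of_funK : cancel K_of_fun fun_of_K.
Proof.
move=> f; apply: functional_extensionality => x.
rewrite /fun_of_K /= size_mkseq iter_finvKV //; congr f.
have x_prefix : is_prefix (mkseq (sval x) (zero_tail x)) (sval x).
  by move=> n; rewrite size_mkseq => lt_n; rewrite nth_mkseq.
apply: sval_inj; rewrite /= -[RHS](catw_dropc x_prefix); congr (catw _ _).
apply: functional_extensionality => n.
by rewrite /dropc /zeros size_mkseq zero_tailP // leq_addl.
Qed.

Lemma fun_of_KK : cancel fun_of_K K_of_fun.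
Proof.
move=> a; apply: sval_inj; apply: functional_extensionality => u.
by rewrite /= fun_of_K_word iter_finvK.
Qed.

Lemma rho_word (v : Vt) n (t s : 'I_n -> seq bool) (sg : {perm 'I_n})
    (rep : V_rep (sval v) t s sg) (b : Kt alpha) i u :
  rho alpha v (fun_of_K b) (Q2_of_word (s (sg i) ++ u)) =
  iter (size (s (sg i)) + size u) alpha (sval b (t i ++ u)).
Proof.
have [_ _ vE] := rep.
have vinvE : vinvQ v (Q2_of_word (s (sg i) ++ u)) = Q2_of_word (t i ++ u).
  by apply: vinvQ_eq; rewrite /= !catw_cat vE.
have ti_tiu : is_prefix (t i) (sval (Q2_of_word (t i ++ u))).
  by rewrite /= catw_cat; exact: is_prefix_catw.
rewrite /rho vinvE (vlog_rep rep ti_tiu) fun_of_K_word size_cat !iterD GRing.opprB.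
exact: apow_subn_iter.
Qed.

Definition is_piK (v : Vt) (b c : Kt alpha) : Prop :=
  exists n (t s : 'I_n -> seq bool) (sg : {perm 'I_n}), V_rep (sval v) t s sg /\
    forall i u, sval c (s (sg i) ++ u) = sval b (t i ++ u).

Lemma piKP (v : Vt) (b : Kt alpha) : is_piK v b (piK v b).
Proof.
apply: (epsilon_spec (inhabits b) (is_piK v b)); have [n [t [s [sg rep]]]] := svalP v.
exists (K_of_fun (rho alpha v (fun_of_K b))), n, t, s, sg; split=> // i u.
by rewrite /= (rho_word rep) size_cat iter_finvK.
Qed.

Lemma fun_of_K_piK v b : fun_of_K (piK v b) = rho alpha v (fun_of_K b).
Proof.
apply: functional_extensionality => x.
have [n [t [s [sg [rep piKE]]]]] := piKP v b; have [_ s_code _] := rep.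
have [j sj_x] := complete_prefix_code_cover (sval x) s_code.
have [u ->] := Q2_of_word_prefix sj_x.
by rewrite -[j](permKV sg) fun_of_K_word piKE (rho_word rep) size_cat.
Qed.

End KOmega.

Theorem mainTheorem8 (Gam : grp) (alpha : Gam -> Gam)
  (alpha_morph : forall x y, alpha (Gmul x y) = Gmul (alpha x) (alpha y))
  (alpha_bij : bijective alpha) :
  exists Phi : GW alpha -> WR Gam,
    bijective Phi /\
    forall p q, Phi (mulG p q) = mulW alpha (Phi p) (Phi q).
Proof.
exists (fun p => (fun_of_K p.1, p.2)); split.
  exists (fun q => (K_of_fun alpha_bij q.1, q.2)) => [[a v]|[f v]] /=.
    by rewrite fun_of_KK.
  by rewrite K_of_funK.
move=> [a v] [b w]; congr pair; apply: functional_extensionality => x.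
by rewrite /= fun_of_K_mul // fun_of_K_piK.
Qed.
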